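(* Let $(X_n)_{n\ge0}$, $(Z_n)_{n\ge0}$, $(\bar Z_n)_{n\ge0}$ be random processes on a common probability space, adapted to a filtration $(\mathcal F_n)$ and taking values in a measurable space $\Omega$, with $X_n\sim p_n$, $Z_n\sim q_n$, $\bar Z_n\sim\bar q_n$. Let $B_n\subseteq\Omega$ be measurable sets such that for every $n\in\mathbb{N}_0$: (1) if $X_k\in B_k^c$ for all $0\le k\le n-1$, then $Z_n=\bar Z_n$; (2) $\chi^2(\bar q_n\|p_n)\le D_n^2$; (3) $\mathbb{P}(X_n\in B_n)\le\delta_n$. Then for every $n$, $$\mathrm{TV}(q_n,\bar q_n)\le\sum_{k=0}^{n-1}(D_k^2+1)^{1/2}\delta_k^{1/2},\qquad \mathrm{TV}(p_n,q_n)\le D_n+\sum_{k=0}^{n-1}(D_k^2+1)^{1/2}\delta_k^{1/2}.$$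
   Context: $\chi^2(q\|p)=\int (dq/dp)^2\,dp-1$ (infinite if $q\not\ll p$); $\mathrm{TV}$ denotes total variation distance. *)

From HB Require Import structures.
From mathcomp Require Import all_boot all_order all_algebra.
From mathcomp Require Import all_classical all_reals all_analysis.
Set Implicit Arguments. Unset Strict Implicit. Unset Printing Implicit Defensive.
Import Order.TTheory GRing.Theory Num.Theory.
Local Open Scope classical_set_scope.
Local Open Scope ring_scope.

Section Defs.
Context {R : realType} {d : measure_display} {Om : measurableType d}.

Definition is_density (p q : probability Om R) (f : Om -> R) : Prop :=
  [/\ measurable_fun setT f, (forall x, 0 <= f x) &
      forall A, measurable A -> q A = (\int[p]_(x in A) (f x)%:E)%E].

(* chi^2(q || p) = \int (dq/dp)^2 dp - 1 ; +oo if q is not << p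
   (the infimum over the empty set of densities is +oo; all densities
   agree p-a.e. so the infimum is the common value otherwise) *)
Definition chi2 (q p : probability Om R) : \bar R :=
  ereal_inf [set (\int[p]_x ((f x) ^+ 2)%:E - 1)%E | f in is_density p q].

Definition TV (p q : probability Om R) : \bar R :=
  ereal_sup [set `|(p A - q A)%E|%E | A in measurable].
End Defs.

Definition filtration {dT : measure_display} (T : measurableType dT)
    (F : nat -> set (set T)) : Prop :=
  (forall n, @sigma_algebra T setT (F n)) /\
  (forall n, F n `<=` measurable) /\
  (forall n, F n `<=` F n.+1).

Definition adapted {dT d : measure_display} (T : measurableType dT)
    (Om : measurableType d) (F : nat -> set (set T)) (X : nat -> T -> Om) : Prop :=
  forall n B, measurable B -> F n (X n @^-1` B).

(* Outside the event E_n = {X_k \in B_k for some k < n} the processes Z_n and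
   Zbar_n coincide, so a coupling argument gives TV(q_n, qbar_n) <= P(E_n), and
   the union bound gives P(E_n) <= sum_k P(X_k \in B_k), each term being at most
   min(1, delta_k) <= (D_k^2 + 1)^(1/2) delta_k^(1/2).
   For any density f of qbar_n with respect to p_n, TV(p_n, qbar_n) is at most
   \int |f - 1| dp_n, which the integrated AM-GM inequality
   |y| <= y^2 / (2c) + c / 2 bounds by (\int (f - 1)^2 dp_n)^(1/2), i.e. by the
   square root of chi^2(qbar_n || p_n); the triangle inequality for TV then gives
   the second bound. *)

From HB Require Import structures.
From mathcomp Require Import all_boot all_order all_algebra.
From mathcomp Require Import all_classical all_reals all_analysis.
From mathcomp Require Import ring lra measurable_realfun.
Set Implicit Arguments. Unset Strict Implicit. Unset Printing Implicit Defensive.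
Import Order.TTheory GRing.Theory Num.Theory.
Local Open Scope classical_set_scope.
Local Open Scope ring_scope.

Lemma ler_norm_amgm (R : realFieldType) (c y : R) :
  0 < c -> `|y| <= y ^+ 2 / (2 * c) + c / 2.
Proof.
move=> c0.
have -> : y ^+ 2 / (2 * c) + c / 2 = `|y| + (`|y| - c) ^+ 2 / (2 * c).
  by rewrite -[y ^+ 2]real_normK ?num_real //; field; rewrite gt_eqF.
by rewrite lerDl divr_ge0 ?sqr_ge0 // mulr_ge0 // ltW.
Qed.

Lemma integral_abs_le_of_sqr (R : realType) (d : measure_display) (T : measurableType d)
    (mu : probability T R) (h : T -> R) (c : R) :
  measurable_fun setT h -> 0 < c ->
  (\int[mu]_x (h x ^+ 2)%:E <= (c ^+ 2)%:E)%E -> (\int[mu]_x `|h x|%:E <= c%:E)%E.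
Proof.
move=> mh c0 h2c.
have inv2c_ge0 : 0 <= (2 * c)^-1 by rewrite invr_ge0 mulr_ge0 // ltW.
have mh2 : measurable_fun setT (fun x => h x ^+ 2) by exact: measurable_funX.
apply: (@le_trans _ _ (\int[mu]_x (((2 * c)^-1)%:E * (h x ^+ 2)%:E + (c / 2)%:E))%E).
  apply: ge0_le_integral => //.
  - by apply/measurable_EFinP; apply: measurableT_comp mh; exact: normr_measurable.
  - apply: emeasurable_funD; last exact: measurable_cst.
    by apply: measurable_funeM; exact/measurable_EFinP.
  - by move=> x _; rewrite -EFinM -EFinD lee_fin mulrC ler_norm_amgm.
rewrite ge0_integralD //; last 3 first.
- by move=> x _; rewrite -EFinM lee_fin mulr_ge0 ?sqr_ge0.
- by apply: measurable_funeM; exact/measurable_EFinP.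
- by move=> x _; rewrite lee_fin divr_ge0 ?ltW.
rewrite ge0_integralZl_EFin //; last 2 first.
- by move=> x _; rewrite lee_fin sqr_ge0.
- exact/measurable_EFinP.
rewrite integral_cst // -[X in (_ + _ * X)%E]/(mu setT) probability_setT mule1.
have amgm_c : (2 * c)^-1 * c ^+ 2 + c / 2 = c by field; rewrite gt_eqF.
apply: (@le_trans _ _ (((2 * c)^-1 * c ^+ 2 + c / 2)%:E)); last by rewrite amgm_c.
by rewrite EFinD (EFinM (2 * c)^-1); apply: leeD => //; exact: lee_wpmul2l.
Qed.

Section density.
Context {R : realType} {d : measure_display} {Om : measurableType d}.
Variables (p q : probability Om R) (f : Om -> R).
Hypothesis f_density : is_density p q f.

Lemma integral_density : (\int[p]_x (f x)%:E = 1)%E.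
Proof.
have [_ _ qE] := f_density.
by rewrite -qE // probability_setT.
Qed.

Lemma density_integrable : p.-integrable setT (EFin \o f).
Proof.
have [mf f_ge0 _] := f_density.
apply/integrableP; split; first exact/measurable_EFinP.
under eq_integral => x _ do rewrite /comp gee0_abs ?lee_fin //.
by rewrite integral_density ltry.
Qed.

Lemma integral_density_sub1_sqr :
  (\int[p]_x ((f x - 1) ^+ 2)%:E = \int[p]_x (f x ^+ 2)%:E - 1)%E.
Proof.
have [mf f_ge0 _] := f_density.
have mf2 : measurable_fun setT (fun x => f x ^+ 2) by exact: measurable_funX.
have mf12 : measurable_fun setT (fun x => (f x - 1) ^+ 2).
  by apply: measurable_funX; apply: measurable_funB.
have : (\int[p]_x (((f x - 1) ^+ 2)%:E + 2%:E * (f x)%:E) =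
        \int[p]_x ((f x ^+ 2)%:E + 1%:E))%E.
  by apply: eq_integral => x _; rewrite -EFinM -!EFinD; congr EFin; ring.
rewrite !ge0_integralD //; last 6 first.
- by move=> x _; rewrite lee_fin sqr_ge0.
- exact/measurable_EFinP.
- by move=> x _; rewrite lee_fin sqr_ge0.
- exact/measurable_EFinP.
- by move=> x _; rewrite mule_ge0 // lee_fin.
- by apply: measurable_funeM; exact/measurable_EFinP.
rewrite ge0_integralZl_EFin //; last 2 first.
- by move=> x _; rewrite lee_fin.
- exact/measurable_EFinP.
rewrite integral_density integral_cst // -[X in (_ = _ + _ * X)%E]/(p setT) probability_setT.
move=> /(congr1 (fun z => z - 2%:E)%E); rewrite mule1 mul1e addeK // => ->.
by rewrite -addeA -EFinB (_ : 1 - 2 = -1) //; lra.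
Qed.

Lemma TV_le_integral_density : (TV p q <= \int[p]_x `|f x - 1|%:E)%E.
Proof.
have [mf f_ge0 qE] := f_density.
apply: ge_ereal_sup => _ [A mA <-].
have int1 : p.-integrable A (EFin \o cst 1) by exact: finite_measure_integrable_cst.
have intf : p.-integrable A (EFin \o f).
  exact: integrableS measurableT mA (subsetT A) density_integrable.
have -> : p A = (\int[p]_(x in A) (cst 1 x)%:E)%E.
  by rewrite -[RHS]/(\int[p]_(x in A) cst 1%E x)%E integral_cst // mul1e.
rewrite qE // -integralB_EFin //.
apply: le_trans (le_abse_integral _ _ _) _ => //.
  apply: emeasurable_funB; apply/measurable_EFinP; first exact: measurable_cst.
  exact: measurable_funTS.
under eq_integral => x _ do rewrite -EFinB abse_EFin distrC.
apply: ge0_subset_integral => //.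
apply/measurable_EFinP; apply: measurableT_comp; first exact: normr_measurable.
by apply: measurable_funB.
Qed.
End density.

Section total_variation.
Context {R : realType} {d : measure_display} {Om : measurableType d}.
Implicit Types p q r : probability Om R.

Lemma abse_measureB p q A : measurable A ->
  `|(p A - q A)%E|%E = `|fine (p A) - fine (q A)|%:E.
Proof. by move=> mA; rewrite -abse_EFin EFinB !fineK ?fin_num_measure. Qed.

Lemma TV_sym p q : TV p q = TV q p.
Proof.
rewrite /TV; congr ereal_sup; apply/seteqP.
by split=> _ [A mA <-]; exists A => //; rewrite !abse_measureB // distrC.
Qed.

Lemma TV_triangle p q r : (TV p q <= TV p r + TV r q)%E.
Proof.
apply: ge_ereal_sup => _ [A mA <-].
have TV_ub p' q' : (`|(p' A - q' A)%E| <= TV p' q')%E by apply: ereal_sup_ubound; exists A.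
apply: le_trans (leeD (TV_ub p r) (TV_ub r q)).
by rewrite !abse_measureB // -EFinD lee_fin ler_distD.
Qed.

Lemma TV_le_of_chi2 p q (D : R) :
  0 <= D -> (chi2 q p <= (D ^+ 2)%:E)%E -> (TV p q <= D%:E)%E.
Proof.
move=> D_ge0 chi2_le; apply/lee_addgt0Pr => e e_gt0.
have c_gt0 : 0 < D + e by lra.
have : (chi2 q p < ((D + e) ^+ 2)%:E)%E.
  by apply: le_lt_trans chi2_le _; rewrite lte_fin; nra.
case/ereal_inf_lt => _ [f f_density <-] chi2f.
rewrite -EFinD; apply: le_trans (TV_le_integral_density f_density) _.
have [mf _ _] := f_density.
apply: (@integral_abs_le_of_sqr _ _ _ _ (fun x => f x - 1)) => //.
  exact: measurable_funB.
by rewrite (integral_density_sub1_sqr f_density) ltW.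
Qed.

Lemma TV_le_coupling {dT : measure_display} {T : measurableType dT}
    (P : probability T R) (Y1 Y2 : T -> Om) (q1 q2 : probability Om R) (E : set T) :
  measurable_fun setT Y1 -> measurable_fun setT Y2 -> measurable E ->
  (forall A, measurable A -> q1 A = P (Y1 @^-1` A)) ->
  (forall A, measurable A -> q2 A = P (Y2 @^-1` A)) ->
  (forall t, ~ E t -> Y1 t = Y2 t) ->
  (TV q1 q2 <= P E)%E.
Proof.
move=> mY1 mY2 mE q1E q2E Y12.
have coupled_le (Y Y' : T -> Om) A : measurable_fun setT Y -> measurable_fun setT Y' ->
    (forall t, ~ E t -> Y t = Y' t) -> measurable A ->
    fine (P (Y @^-1` A)) <= fine (P (Y' @^-1` A)) + fine (P E).
  move=> mY mY' YY' mA.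
  have mYA : measurable (Y @^-1` A) by rewrite -[_ @^-1` _]setTI; exact: mY.
  have mY'A : measurable (Y' @^-1` A) by rewrite -[_ @^-1` _]setTI; exact: mY'.
  rewrite -lee_fin EFinD !fineK ?fin_num_measure //.
  apply: le_trans (measureU2 _ _ _) => //.
  apply: le_measure; rewrite ?inE //; first exact: measurableU.
  move=> t YAt; have [Et|nEt] := pselect (E t); first by right.
  by left; rewrite /= -(YY' t nEt).
apply: ge_ereal_sup => _ [A mA <-].
have := coupled_le Y1 Y2 A mY1 mY2 Y12 mA.
have := coupled_le Y2 Y1 A mY2 mY1 (fun t nEt => esym (Y12 t nEt)) mA.
rewrite abse_measureB // q1E // q2E // -(fineK (fin_num_measure P E mE)) lee_fin.
by rewrite ler_distl; lra.
Qed.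
End total_variation.

Lemma probability_le_sqrt {R : realType} {d : measure_display} {T : measurableType d}
    (P : probability T R) (S : set T) (delta : R) :
  measurable S -> (P S <= delta%:E)%E -> (P S <= (Num.sqrt delta)%:E)%E.
Proof.
move=> mS PS_le.
have PS_fin := fin_num_measure P S mS.
have PS_ge0 : 0 <= fine (P S) by rewrite fine_ge0.
have PS_le1 : fine (P S) <= 1 by rewrite -lee_fin fineK // probability_le1.
have PS_le_delta : fine (P S) <= delta by rewrite -lee_fin fineK.
by rewrite -(fineK PS_fin) lee_fin -(ger0_norm PS_ge0) -sqrtr_sqr ler_wsqrtr //; nra.
Qed.

Lemma adapted_measurable_fun {dT d : measure_display} (T : measurableType dT)
    (Om : measurableType d) (F : nat -> set (set T)) (X : nat -> T -> Om) :
  filtration F -> adapted F X -> forall n, measurable_fun setT (X n).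
Proof. by move=> [_ [F_meas _]] adX n _ A mA; rewrite setTI; exact/F_meas/adX. Qed.

Theorem theorem5 (R : realType) (dT : measure_display) (T : measurableType dT)
  (P : probability T R) (d : measure_display) (Om : measurableType d)
  (F : nat -> set (set T)) (X Z Zbar : nat -> T -> Om)
  (p q qbar : nat -> probability Om R)
  (B : nat -> set Om) (D delta : nat -> R) :
  filtration F -> adapted F X -> adapted F Z -> adapted F Zbar ->
  (forall n A, measurable A -> p n A = P (X n @^-1` A)) ->
  (forall n A, measurable A -> q n A = P (Z n @^-1` A)) ->
  (forall n A, measurable A -> qbar n A = P (Zbar n @^-1` A)) ->
  (forall n, measurable (B n)) ->
  (forall n, 0 <= D n) ->
  (forall n t, (forall k, (k < n)%N -> ~ B k (X k t)) -> Z n t = Zbar n t) ->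
  (forall n, (chi2 (qbar n) (p n) <= ((D n) ^+ 2)%:E)%E) ->
  (forall n, (P (X n @^-1` B n) <= (delta n)%:E)%E) ->
  forall n,
    (TV (q n) (qbar n) <=
      (\sum_(0 <= k < n) Num.sqrt ((D k) ^+ 2 + 1) * Num.sqrt (delta k))%:E)%E /\
    (TV (p n) (q n) <=
      (D n + \sum_(0 <= k < n) Num.sqrt ((D k) ^+ 2 + 1) * Num.sqrt (delta k))%:E)%E.
Proof.
move=> hF adX adZ adZbar _ qE qbarE mB D_ge0 ZE chi2_le PB_le n.
have mX := adapted_measurable_fun hF adX.
have mZ := adapted_measurable_fun hF adZ.
have mZbar := adapted_measurable_fun hF adZbar.
set S := \sum_(0 <= k < n) _.
have mXB k : measurable (X k @^-1` B k) by rewrite -[_ @^-1` _]setTI; exact: mX.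
pose E := \big[setU/set0]_(k < n) X k @^-1` B k.
have PE_le : (P E <= S%:E)%E.
  apply: le_trans (Boole_inequality P (fun k (_ : (k < n)%N) => mXB k)) _.
  rewrite /S big_mkord -sumEFin; apply: lee_sum => k _.
  apply: le_trans (probability_le_sqrt (mXB k) (PB_le k)) _.
  by rewrite lee_fin ler_peMl ?sqrtr_ge0 // -{1}sqrtr1 ler_wsqrtr // lerDr sqr_ge0.
have TV_q_qbar : (TV (q n) (qbar n) <= S%:E)%E.
  apply: le_trans PE_le; apply: (TV_le_coupling (mZ n) (mZbar n) _ (qE n) (qbarE n)).
    exact: bigsetU_measurable.
  move=> t notE; apply: ZE => k kn Bk; apply: notE.
  exact: (@bigsetU_sup _ k n (fun k => X k @^-1` B k) kn t Bk).
split => //.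
apply: le_trans (TV_triangle (p n) (q n) (qbar n)) _.
by rewrite (TV_sym (qbar n)) EFinD leeD // TV_le_of_chi2.
Qed.
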